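(* Consider an execution of the Adaptive Algorithm. If position $p_j$ interviews applicant $a_i$ and $i<j$, then $a_i$ has been interviewed by every position $p_{j'}$ with $i\le j'<j$.
   Context: Model. Let $A=\{a_1,\dots,a_n\}$ be a set of applicants and $P=\{p_1,\dots,p_n\}$ a set of positions. Each applicant $a_i$ has a publicly known value $u_i\in\mathbb R$ and each position $p_j$ a publicly known value $v_j\in\mathbb R$, indexed so that $u_1\ge u_2\ge\dots\ge u_n$ and $v_1\ge v_2\ge\dots\ge v_n$. The random variables $\epsilon^A_{ij}$, $\epsilon^P_{ji}$ ($i,j\in[n]$) are mutually independent and identically distributed according to a known distribution symmetric about $0$ (mean zero). The utility of $a_i$ for $p_j$ is $v_j+\epsilon^A_{ij}$ and the utility of $p_j$ for $a_i$ is $u_i+\epsilon^P_{ji}$; the values $\epsilon^A_{ij},\epsilon^P_{ji}$ become known only when $a_i$ and $p_j$ interview each other. The observed utility $v^o_{ij}$ of $a_i$ for $p_j$ equals $v_j+\epsilon^A_{ij}$ if $a_i,p_j$ have interviewed and $v_j$ otherwise; $u^o_{ji}$ is defined symmetrically ($u_i+\epsilon^P_{ji}$ or $u_i$). Write $p_j\succ_{a_i}p_{j'}$ iff $v^o_{ij}>v^o_{ij'}$ and $a_i\succ_{p_j}a_{i'}$ iff $u^o_{ji}>u^o_{ji'}$ (ties broken in favor of the smaller index); every agent prefers any partner to being unmatched. For a matching $\mu$, $\mu(x)$ denotes the partner of $x$ ($\emptyset$ if unmatched). Adaptive Algorithm. Initially all agents are unmatched and $v^o_{ij}=v_j$, $u^o_{ji}=u_i$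 for all $i,j$. For an unmatched applicant $a$, let $\beta(a)$ be $a$'s most preferred position (w.r.t. current observed utilities) that has not yet rejected $a$. While some applicant is unmatched: let $j^*$ be the smallest index such that $\beta(a_i)=p_{j^*}$ for some unmatched $a_i$; let $a_{i^*}$ be $p_{j^*}$'s favorite applicant among $\{a_i:\beta(a_i)=p_{j^*},\mu(a_i)=\emptyset\}$. If $a_{i^*},p_{j^*}$ have not interviewed and ($i^*\le j^*$ or $a_{i^*}\succ_{p_{j^*}}\mu(p_{j^*})$), then they interview and $v^o_{i^*j^*},u^o_{j^*i^*}$ are updated. Otherwise: if $\mu(p_{j^*})\succ_{p_{j^*}}a_{i^*}$, then $p_{j^*}$ rejects $a_{i^*}$; else $p_{j^*}$ rejects $\mu(p_{j^*})$ (if nonempty) and $a_{i^*},p_{j^*}$ become matched. When all applicants are matched, output $\mu$. *)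

From mathcomp Require Import all_boot all_order all_algebra.
Set Implicit Arguments. Unset Strict Implicit. Unset Printing Implicit Defensive.
Import Order.TTheory GRing.Theory Num.Theory.
Local Open Scope ring_scope.

(* Indices are 0-based: applicant a_{i+1} is (i : 'I_n), position p_{j+1} is (j : 'I_n). *)

(* A market together with one realization of the noise terms.
   epsA i j = eps^A_{ij} (applicant i's noise for position j),
   epsP j i = eps^P_{ji} (position j's noise for applicant i). *)
Record market (R : realFieldType) (n : nat) := Market {
  uval : 'I_n -> R;
  vval : 'I_n -> R;
  epsA : 'I_n -> 'I_n -> R;
  epsP : 'I_n -> 'I_n -> R }.

(* State of the algorithm. (i,j) \in interviewed: a_i and p_j have interviewed.
   (i,j) \in rejected: p_j has rejected a_i.  matching i = Some j: mu(a_i) = p_j. *)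
Record state (n : nat) := State {
  interviewed : {set 'I_n * 'I_n};
  rejected : {set 'I_n * 'I_n};
  matching : {ffun 'I_n -> option 'I_n} }.

Inductive action (n : nat) :=
| Interview of 'I_n & 'I_n
| Reject of 'I_n & 'I_n
| Match of 'I_n & 'I_n.

Section Alg.
Context {R : realFieldType} {n : nat} (M : market R n).

Definition vo (s : state n) (i j : 'I_n) : R :=
  if (i, j) \in interviewed s then vval M j + epsA M i j else vval M j.
Definition uo (s : state n) (j i : 'I_n) : R :=
  if (i, j) \in interviewed s then uval M i + epsP M j i else uval M i.

(* p_j strictly preferred to p_j' by a_i (ties broken in favour of smaller index) *)
Definition prefA (s : state n) (i j j' : 'I_n) : bool :=
  (vo s i j' < vo s i j) || ((vo s i j == vo s i j') && (j < j')%N).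
Definition prefP (s : state n) (j i i' : 'I_n) : bool :=
  (uo s j i' < uo s j i) || ((uo s j i == uo s j i') && (i < i')%N).

Definition unmatched (s : state n) (i : 'I_n) : bool := matching s i == None.

Definition muP (s : state n) (j : 'I_n) : option 'I_n :=
  [pick i | matching s i == Some j].

Definition beta (s : state n) (i : 'I_n) : option 'I_n :=
  [pick j | ((i, j) \notin rejected s) &&
            [forall j', ((i, j') \notin rejected s) ==> (j' == j) || prefA s i j j']].

Definition proposes (s : state n) (j i : 'I_n) : bool :=
  unmatched s i && (beta s i == Some j).

Definition jstar (s : state n) : option 'I_n :=
  [pick j | [exists i, proposes s j i] &&
            [forall j', [exists i, proposes s j' i] ==> (j <= j')%N]].

Definition istar (s : state n) (j : 'I_n) : option 'I_n :=
  [pick i | proposes s j i &&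
            [forall i', proposes s j i' ==> (i' == i) || prefP s j i i']].

(* The action performed in the current iteration (None = the algorithm stops). *)
Definition next_action (s : state n) : option (action n) :=
  if [forall i, ~~ unmatched s i] then None else
  match jstar s with
  | None => None
  | Some j =>
    match istar s j with
    | None => None
    | Some i =>
      let better := match muP s j with
                    | None => true (* any partner preferred to being unmatched *)
                    | Some i' => prefP s j i i' end in
      if ((i, j) \notin interviewed s) && ((i <= j)%N || better)
      then Some (Interview i j)
      else match muP s j with
           | Some i' => if prefP s j i' i then Some (Reject i j) else Some (Match i j)
           | None => Some (Match i j)
           end
    end
  end.

Definition apply_action (s : state n) (a : action n) : state n :=
  match a with
  | Interview i j => State ((i, j) |: interviewed s) (rejected s) (matching s)
  | Reject i j => State (interviewed s) ((i, j) |: rejected s) (matching s)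
  | Match i j =>
    match muP s j with
    | None => State (interviewed s) (rejected s)
                    [ffun k => if k == i then Some j else matching s k]
    | Some i' => State (interviewed s) ((i', j) |: rejected s)
                    [ffun k => if k == i then Some j
                               else if k == i' then None else matching s k]
    end
  end.

Definition step (s : state n) : state n :=
  match next_action s with None => s | Some a => apply_action s a end.

Definition init_state : state n := State set0 set0 [ffun => None].

(* state after k iterations (stationary once the algorithm has stopped) *)
Definition run (k : nat) : state n := iter k step init_state.

End Alg.

From mathcomp Require Import all_boot all_order all_algebra.
Set Implicit Arguments. Unset Strict Implicit. Unset Printing Implicit Defensive.
Import Order.TTheory GRing.Theory Num.Theory.
Local Open Scope ring_scope.

(* Throughout the run, whenever p_j rejects or matches a_i with i <= j, the
   pair has interviewed before: the algorithm interviews first in that case.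
   Now let p_j interview a_i with i < j, so p_j = beta(a_i) and they have not
   interviewed yet.  If i <= j' < j and p_j' has rejected a_i, they have
   interviewed by the invariant.  Otherwise p_j' is still available to a_i,
   and if they had not interviewed, a_i would observe v_j' >= v_j for p_j'
   against v_j for p_j, with the smaller index j' winning ties, so p_j would
   not be a_i's favourite. *)

Section AdaptiveAlgorithm.
Variables (R : realFieldType) (n : nat) (M : market R n).

Lemma next_action_Interview_proposes (s : state n) (i j : 'I_n) :
  next_action M s = Some (Interview i j) ->
  (i, j) \notin interviewed s /\ proposes M s j i.
Proof.
rewrite /next_action; case: ifP => _ //.
case: (jstar M s) => [j0|] //; case Ei: (istar M s j0) => [i0|] //.
have proposes0 : proposes M s j0 i0.
  by move: Ei; rewrite /istar; case: pickP => // x /andP[proposes_x _] [<-].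
case: ifP => [/andP[fresh _] [<- <-] //|_].
by case: (muP s j0) => [i'|] //; case: ifP.
Qed.

Lemma next_action_decision_interviewed (s : state n) (i j : 'I_n) :
  next_action M s = Some (Reject i j) \/ next_action M s = Some (Match i j) ->
  (i <= j)%N -> (i, j) \in interviewed s.
Proof.
rewrite /next_action; case: ifP => _; first by case.
case: (jstar M s) => [j0|]; last by case.
case: (istar M s j0) => [i0|]; last by case.
case: (muP s j0) => [i'|]; case: ifP => do_interview; try case: ifP => _;
  try by case=> [] [].
all: move=> decided; have [<- <-] : i0 = i /\ j0 = j by case: decided => [] [].
all: by move=> le_ij; apply: contraFT do_interview => ->; rewrite le_ij.
Qed.

Definition low_decisions_interviewed (s : state n) :=
  (forall i j : 'I_n, (i, j) \in rejected s -> (i <= j)%N ->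
     (i, j) \in interviewed s) /\
  (forall i j : 'I_n, matching s i = Some j -> (i <= j)%N ->
     (i, j) \in interviewed s).

Lemma muP_matching (s : state n) (i j : 'I_n) :
  muP s j = Some i -> matching s i = Some j.
Proof. by rewrite /muP; case: pickP => // x /eqP match_x [<-]. Qed.

Lemma low_decisions_interviewed_step (s : state n) :
  low_decisions_interviewed s -> low_decisions_interviewed (step M s).
Proof.
move=> [rej_int match_int]; rewrite /step.
case E: (next_action M s) => [[i j|i j|i j]|]; last by split.
- by split=> a b /= => [/rej_int|/match_int] int_ab /int_ab; apply: setU1r.
- split=> a b /=; last exact: match_int.
  rewrite in_setU1 => /orP[/eqP [-> ->]|/rej_int //].
  by apply: next_action_decision_interviewed; left.
- have int_ij : (i <= j)%N -> (i, j) \in interviewed s.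
    by apply: next_action_decision_interviewed; right.
  rewrite /apply_action; case P: (muP s j) => [i'|]; split=> a b /=.
  + rewrite in_setU1 => /orP[/eqP [-> ->]|/rej_int //].
    exact/match_int/muP_matching.
  + rewrite ffunE; case: eqP => [-> [<-] //|_].
    by case: eqP => // _; apply: match_int.
  + exact: rej_int.
  + by rewrite ffunE; case: eqP => [-> [<-] //|_]; apply: match_int.
Qed.

Lemma low_decisions_interviewed_run k : low_decisions_interviewed (run M k).
Proof.
elim: k => [|k IHk]; first by split=> a b /=; rewrite ?inE // ffunE.
by rewrite /run iterS; apply: low_decisions_interviewed_step.
Qed.

Lemma beta_prefA (s : state n) (i j j' : 'I_n) :
  beta M s i = Some j -> (i, j') \notin rejected s -> j' != j -> prefA M s i j j'.
Proof.
rewrite /beta; case: pickP => // x /andP[_ /forallP best_x] [<-] avail_j' ne_j'x.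
by have := best_x j'; rewrite avail_j' (negbTE ne_j'x).
Qed.

Lemma prefA_uninterviewed (s : state n) (i j j' : 'I_n) :
  (forall j1 j2 : 'I_n, (j1 <= j2)%N -> vval M j2 <= vval M j1) ->
  (i, j) \notin interviewed s -> (i, j') \notin interviewed s ->
  (j' < j)%N -> ~~ prefA M s i j j'.
Proof.
move=> v_noninc fresh_j fresh_j' lt_j'j.
have le_j'j := ltnW lt_j'j.
rewrite /prefA /vo (negbTE fresh_j) (negbTE fresh_j') (leq_gtF le_j'j) andbF orbF.
by rewrite -leNgt v_noninc.
Qed.

End AdaptiveAlgorithm.

(* The ordering of the applicants' values u_i plays no role. *)
Theorem mainTheorem3 (R : realFieldType) (n : nat) (M : market R n) :
  (forall i i' : 'I_n, (i <= i')%N -> uval M i' <= uval M i) ->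
  (forall j j' : 'I_n, (j <= j')%N -> vval M j' <= vval M j) ->
  forall (k : nat) (i j : 'I_n),
    next_action M (run M k) = Some (Interview i j) ->
    (i < j)%N ->
    forall j' : 'I_n, (i <= j')%N -> (j' < j)%N ->
      (i, j') \in interviewed (run M k).
Proof.
move=> _ v_noninc k i j /next_action_Interview_proposes [fresh_j /andP[_ /eqP beta_i]].
move=> _ j' le_ij' lt_j'j.
have [rej_int _] := low_decisions_interviewed_run M k.
have [/rej_int -> //|avail_j'] := boolP ((i, j') \in rejected (run M k)).
apply: contraT => fresh_j'.
have : prefA M (run M k) i j j'.
  by apply: (beta_prefA beta_i) => //; apply: contraTneq lt_j'j => ->; rewrite ltnn.
by rewrite (negbTE (prefA_uninterviewed v_noninc fresh_j fresh_j' lt_j'j)).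
Qed.
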